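(* Let $(\Omega,\Sigma,\Pr)$ be a probability space and let $A_i\in\Sigma$ for $i\in\mathbb{N}$. For $k\in\mathbb{N}$ let $S_k:=\sum_{1\le i_1<\cdots<i_k}\Pr(A_{i_1}\cap\cdots\cap A_{i_k})$, and assume $S_l\in[0,\infty)$ for all $l\in\mathbb{N}$. Suppose that for some integer $m>1$ the identity $$\Pr\Big(\bigcup_{1\le i_1<\cdots<i_k}(A_{i_1}\cap\cdots\cap A_{i_k})\Big)=\sum_{j\in\mathbb{Z}_+}(-1)^j\binom{j+k-1}{k-1}S_{j+k}$$ holds for $k=m$ (with the series convergent). Then this identity holds for each $k=1,\ldots,m-1$.
   Context: $\mathbb{N}$ denotes the positive integers and $\mathbb{Z}_+$ the nonnegative integers. *)

From HB Require Import structures.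
From mathcomp Require Import all_boot all_order all_algebra finmap.
From mathcomp Require Import all_classical all_reals all_analysis.
Set Implicit Arguments. Unset Strict Implicit. Unset Printing Implicit Defensive.
Import Order.TTheory GRing.Theory Num.Theory numFieldNormedType.Exports.
Local Open Scope classical_set_scope.
Local Open Scope ring_scope.

(* Index sets {i_1 < ... < i_k} of positive integers, as finite sets of nat
   of cardinality k, all of whose elements are >= 1. *)
Definition ksubsets (k : nat) : set {fset nat} :=
  [set I : {fset nat} | #|` I| = k /\ (forall i, i \in I -> (0 < i)%N)].

Definition inter_of {T : Type} (A : nat -> set T) (I : {fset nat}) : set T :=
  \bigcap_(i in [set i | i \in I]) A i.

Definition Ssum d (T : measurableType d) (R : realType) (P : probability T R)
  (A : nat -> set T) (k : nat) : \bar R :=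
  (\esum_(I in ksubsets k) P (inter_of A I))%E.

Definition atleast {T : Type} (A : nat -> set T) (k : nat) : set T :=
  \bigcup_(I in ksubsets k) inter_of A I.

Definition identity_holds d (T : measurableType d) (R : realType)
  (P : probability T R) (A : nat -> set T) (k : nat) : Prop :=
  series (fun j : nat => (-1) ^+ j * ('C(j + k - 1, k - 1))%:R
                          * fine (Ssum P A (j + k)))
    @ \oo --> fine (P (atleast A k)).

From HB Require Import structures.
From mathcomp Require Import all_boot all_order all_algebra finmap.
From mathcomp Require Import all_classical all_reals all_analysis.
From mathcomp Require Import ring zify.
Set Implicit Arguments. Unset Strict Implicit. Unset Printing Implicit Defensive.
Import Order.TTheory GRing.Theory Num.Theory numFieldNormedType.Exports.
Local Open Scope classical_set_scope.
Local Open Scope ring_scope.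

(* Truncate to the events A_1, ..., A_M and split the space into the atoms on
   which exactly the events indexed by s occur.  On an atom with |s| = n, S_l
   counts C(n, l), so the partial sum through j = J of the k-th series is
   [k <= n] + (-1)^J r_{k,J}(n), where r_{k,J}(n) = bonf_coef k J n =
   sum_{k <= t < n} C(t, k-1) C(t-k, J) >= 0, and r_{k,J+1}(n) <= r_{k+1,J}(n)
   as soon as k <= J+1.  Averaging over the atoms and letting M grow
   (continuity of P from below, and S_l as the supremum of its truncations),
   the signed remainders R_k(J) of the identities satisfy
   0 <= R_k(J+1) <= R_{k+1}(J).  So the identity for k+1 implies the one for k,
   and we descend from m. *)

Lemma mul_bin_nested (j a n : nat) :
  ('C(j + a, a) * 'C(n, j + a) = 'C(n, a) * 'C(n - a, j))%N.
Proof.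
have [n_lt|le_ja_n] := ltnP n (j + a).
  rewrite (bin_small n_lt) muln0.
  have [n_lt_a|le_an] := ltnP n a; first by rewrite bin_small.
  by rewrite (@bin_small (n - a)) ?muln0 //; lia.
have facts_gt0 : (0 < a`! * j`! * (n - a - j)`!)%N by rewrite !muln_gt0 !fact_gt0.
apply/eqP; rewrite -(eqn_pmul2r facts_gt0); apply/eqP.
have Cja := bin_fact (leq_addl j a); rewrite addnK in Cja.
have Cn_ja := bin_fact le_ja_n.
have sub_ja : (n - (j + a) = n - a - j)%N by lia.
rewrite sub_ja in Cn_ja.
have Cna := bin_fact (leq_trans (leq_addl j a) le_ja_n).
have Cn_a_j : ('C(n - a, j) * (j`! * (n - a - j)`!) = (n - a)`!)%N.
  by apply: bin_fact; lia.
transitivity ('C(n, j + a) * (('C(j + a, a) * (a`! * j`!)) * (n - a - j)`!))%N.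
  by ring.
by rewrite Cja Cn_ja -Cna -Cn_a_j; ring.
Qed.

Definition bonf_coef (k J n : nat) : nat :=
  (\sum_(t < n | (k <= t)%N) 'C(t, k.-1) * 'C(t - k, J))%N.

Lemma bonf_coefS (k J n : nat) :
  bonf_coef k J n.+1 = (bonf_coef k J n + (k <= n) * ('C(n, k.-1) * 'C(n - k, J)))%N.
Proof.
rewrite /bonf_coef big_mkcond big_ord_recr /= -big_mkcond /=.
by case: (k <= n)%N; rewrite ?mul1n ?mul0n.
Qed.

Lemma leq_bonf_coef_shift (k J n : nat) : (0 < k)%N -> (k <= J.+1)%N ->
  (bonf_coef k J.+1 n <= bonf_coef k.+1 J n)%N.
Proof.
move=> k_gt0 le_kJ; rewrite /bonf_coef big_mkcond [X in (_ <= X)%N]big_mkcond /=.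
apply: leq_sum => t _.
(* For k < t the ratio of the left term to the right one is
   k (t - k) / ((J + 1) (t - k + 1)) <= 1. *)
have [lt_kt|//|<-] := ltngtP k t; last by rewrite subnn bin0n muln0.
case: k k_gt0 le_kJ lt_kt => // a _ le_aJ lt_at /=.
set s := (t - a.+1)%N.
have s_gt0 : (0 < s)%N by rewrite /s subn_gt0.
have -> : (t - a.+2 = s.-1)%N by rewrite /s; lia.
rewrite -(@leq_pmul2r (a.+1 * s)) ?muln_gt0 //.
have -> : ('C(t, a.+1) * 'C(s.-1, J) * (a.+1 * s))%N
    = ('C(t, a) * 'C(s, J.+1) * (J.+1 * (t - a)))%N.
  transitivity ((a.+1 * 'C(t, a.+1)) * (s * 'C(s.-1, J)))%N; first by ring.
  by rewrite mul_bin_left mul_bin_diag; ring.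
rewrite leq_mul2l; apply/orP; right.
by apply: leq_mul => //; rewrite /s; lia.
Qed.

Section BonferroniSums.
Variable R : comRingType.

Lemma sum_alt_bin (a J : nat) : (0 < a)%N ->
  \sum_(j < J.+1) (-1) ^+ j * ('C(a, j))%:R = (-1) ^+ J * ('C(a.-1, J))%:R :> R.
Proof.
case: a => // a _ /=.
elim: J => [|J IH]; first by rewrite big_ord1 !bin0.
by rewrite big_ord_recr /= IH binS natrD exprS; ring.
Qed.

Lemma bonf_partial_sum (k J n : nat) : (0 < k)%N ->
  \sum_(j < J.+1) (-1) ^+ j * ('C(j + k - 1, k - 1))%:R * ('C(n, j + k))%:R
  = ((k <= n)%N)%:R + (-1) ^+ J * (bonf_coef k J n)%:R :> R.
Proof.
case: k => // a _; rewrite subSS subn0.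
under eq_bigr do rewrite addnS subSS subn0.
elim: n => [|n IH].
  rewrite /bonf_coef big_ord0 mulr0 addr0 /=.
  by apply: big1 => j _; rewrite bin0n /= mulr0.
have pascal : \sum_(j < J.+1) (-1) ^+ j * ('C(j + a, a))%:R * ('C(n.+1, (j + a).+1))%:R
  = \sum_(j < J.+1) (-1) ^+ j * ('C(j + a, a))%:R * ('C(n, (j + a).+1))%:R
    + ('C(n, a))%:R * \sum_(j < J.+1) (-1) ^+ j * ('C(n - a, j))%:R :> R.
  rewrite mulr_sumr -big_split /=; apply: eq_bigr => j _.
  rewrite binS natrD mulrDr; congr (_ + _).
  by rewrite mulrCA -mulrA -natrM mul_bin_nested natrM; ring.
rewrite pascal IH bonf_coefS.
have [lt_na|lt_an|<-] := ltngtP n a.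
- by rewrite (bin_small lt_na) mul0r /= addn0 addr0 ltnS leqNgt lt_na.
- rewrite ltnS ltnW // sum_alt_bin ?subn_gt0 //.
  have -> : (n - a.+1 = (n - a).-1)%N by lia.
  by rewrite mul1n natrD natrM /=; ring.
- rewrite big_ord_recl big1 ?bin0 /=; last first.
    by move=> i _; rewrite subnn bin0n /= mulr0.
  by rewrite ltnSn binn /= addn0 mulr1 addr0 add0r mulr1 addrC.
Qed.

Lemma bonf_remainder (k J n : nat) : (0 < k)%N ->
  (-1) ^+ J.+1 * (((k <= n)%N)%:R
    - \sum_(j < J.+1) (-1) ^+ j * ('C(j + k - 1, k - 1))%:R * ('C(n, j + k))%:R)
  = (bonf_coef k J n)%:R :> R.
Proof.
move=> k_gt0; rewrite bonf_partial_sum // opprD addNKr exprS mulN1r.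
by rewrite mulNr mulrN opprK signrMK.
Qed.

End BonferroniSums.

Lemma fsbig_finType (U : Type) (idx : U) (op : Monoid.com_law idx)
    (I : finType) (p : pred I) (f : I -> U) :
  \big[op/idx]_(i \in [set i | p i]) f i = \big[op/idx]_(i | p i) f i.
Proof.
by rewrite [RHS]bigfs ?index_enum_uniq // => i; rewrite mem_index_enum.
Qed.

Lemma preimage_pred_bigcup (U : Type) (I : finType) (g : U -> I) (p : pred I) :
  [set w | p (g w)] = \bigcup_(i in [set i | p i]) g @^-1` [set i].
Proof.
apply/seteqP; split => w /=; first by exists (g w).
by move=> [i pi /= gwi]; rewrite gwi.
Qed.

Section MeasureFibers.
Context d (T : measurableType d) (R : realType) (mu : {measure set T -> \bar R}).
Variables (I : finType) (g : T -> I).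
Hypothesis mg : forall i, measurable (g @^-1` [set i]).

Lemma measurable_pred_fibers (p : pred I) : measurable [set w | p (g w)].
Proof. by rewrite preimage_pred_bigcup; apply: fin_bigcup_measurable. Qed.

Lemma measure_pred_fibers (p : pred I) :
  mu [set w | p (g w)] = (\sum_(i | p i) mu (g @^-1` [set i]))%E.
Proof.
rewrite preimage_pred_bigcup measure_fin_bigcup ?fsbig_finType //.
- exact: finite_finset.
- by move=> i j _ _ [w [/= <- <-]].
Qed.

End MeasureFibers.

Lemma subset_le_esum (R : realType) (I : choiceType) (X Y : set I) (a : I -> \bar R) :
  X `<=` Y -> (\esum_(i in X) a i <= \esum_(i in Y) a i)%E.
Proof.
move=> XY; apply: ereal_sup_le => _ [F [F_fin FX] <-]; exists F => //.
by split => //; apply: subset_trans XY.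
Qed.

Lemma finite_fsets_bounded (X : set {fset nat}) : finite_set X ->
  exists M, forall I, X I -> forall x, x \in I -> (x <= M)%N.
Proof.
move=> X_fin; exists (\max_(I <- fset_set X) \max_(x <- I) x)%N => I XI x xI.
apply: (leq_trans (@leq_bigmax_seq _ _ xpredT id x xI isT)).
have IX : I \in fset_set X by rewrite in_fset_set // mem_set.
exact: (@leq_bigmax_seq _ _ xpredT (fun I : {fset nat} => \max_(x <- I) x)%N I IX isT).
Qed.

Definition shift_set (M : nat) (t : {set 'I_M}) : {fset nat} :=
  [fset x in [seq (nat_of_ord i).+1 | i <- enum t]]%fset.

Lemma shift_setE M (t : {set 'I_M}) x :
  (x \in shift_set t) = [exists i : 'I_M, (i \in t) && (x == i.+1)].
Proof.
rewrite inE /=; apply/mapP/existsP => [[i]|[i /andP[it /eqP ->]]].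
  by rewrite mem_enum => it ->; exists i; rewrite it eqxx.
by exists i; rewrite ?mem_enum.
Qed.

Lemma mem_shift_set M (t : {set 'I_M}) (i : 'I_M) : (i.+1 \in shift_set t) = (i \in t).
Proof.
rewrite shift_setE; apply/existsP/idP => [[j /andP[jt /eqP [ij]]]|it].
  by rewrite (val_inj ij).
by exists i; rewrite it eqxx.
Qed.

Lemma shift_set_bounds M (t : {set 'I_M}) x : x \in shift_set t -> (0 < x <= M)%N.
Proof. by rewrite shift_setE => /existsP[i /andP[_ /eqP ->]] /=. Qed.

Lemma card_shift_set M (t : {set 'I_M}) : #|` shift_set t| = #|t|.
Proof.
rewrite card_fseq undup_id ?size_map -?cardE //.
by rewrite map_inj_uniq ?enum_uniq // => i j [] /val_inj.
Qed.

Lemma shift_set_inj M : injective (@shift_set M).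
Proof. by move=> s t st; apply/setP => i; rewrite -!mem_shift_set st. Qed.

Lemma shift_set_onto M (I : {fset nat}) : (forall x, x \in I -> (0 < x <= M)%N) ->
  shift_set [set i : 'I_M | i.+1 \in I] = I.
Proof.
move=> I_bounded; apply/fsetP => x; rewrite shift_setE.
apply/existsP/idP => [[i /andP[]]|xI]; first by rewrite inE => iI /eqP ->.
have /andP[x_gt0 le_xM] := I_bounded x xI.
have lt_x1M : (x.-1 < M)%N by lia.
by exists (Ordinal lt_x1M); rewrite inE /= prednK // xI eqxx.
Qed.

Section Truncation.
Context d (T : measurableType d) (R : realType) (P : probability T R).
Variables (A : nat -> set T) (mA : forall i, measurable (A i)).

Definition hits (M : nat) (w : T) : {set 'I_M} := [set i : 'I_M | `[< A i.+1 w >]].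

Lemma measurable_hits_eq M (s : {set 'I_M}) : measurable (hits M @^-1` [set s]).
Proof.
have -> : hits M @^-1` [set s] =
    \bigcap_(i in [set: 'I_M]) (if i \in s then A i.+1 else ~` A i.+1).
  apply/seteqP; split => w /=.
    by move=> <- i _; rewrite inE; case: asboolP.
  move=> w_s; apply/setP => i; rewrite inE.
  by have := w_s i I; case: (i \in s) => ?; [apply/asboolT | apply/asboolF].
apply: fin_bigcap_measurable; first exact: finite_finset.
by move=> i _; case: (i \in s) => //; apply: measurableC.
Qed.

Definition atom M (s : {set 'I_M}) : R := fine (P (hits M @^-1` [set s])).

Lemma atom_ge0 M (s : {set 'I_M}) : 0 <= atom s.
Proof. by rewrite fine_ge0. Qed.

Lemma prob_hits M (p : pred {set 'I_M}) :
  P [set w | p (hits M w)] = (\sum_(s | p s) atom s)%:E.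
Proof.
rewrite measure_pred_fibers; last exact: measurable_hits_eq.
rewrite -sumEFin; apply: eq_bigr => s _.
by rewrite fineK // fin_num_measure //; apply: measurable_hits_eq.
Qed.

Lemma inter_shift_set M (t : {set 'I_M}) :
  inter_of A (shift_set t) = [set w | t \subset hits M w].
Proof.
apply/seteqP; split => w /=.
  move=> w_t; apply/fintype.subsetP => i it; rewrite inE; apply/asboolP.
  by apply: w_t; rewrite /= mem_shift_set.
move=> /fintype.subsetP t_hits x /=; rewrite shift_setE => /existsP[i /andP[it /eqP ->]].
by have := t_hits i it; rewrite inE => /asboolP.
Qed.

Lemma measurable_inter_shift_set M (t : {set 'I_M}) :
  measurable (inter_of A (shift_set t)).
Proof.
rewrite inter_shift_set.
exact: (measurable_pred_fibers (measurable_hits_eq (M := M)) (fun s => t \subset s)).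
Qed.

Definition Strunc M l : R :=
  \sum_(t : {set 'I_M} | #|t| == l) fine (P (inter_of A (shift_set t))).

Lemma StruncE M l : Strunc M l = \sum_(s : {set 'I_M}) atom s * ('C(#|s|, l))%:R.
Proof.
have inter_atoms (t : {set 'I_M}) :
    fine (P (inter_of A (shift_set t))) = \sum_(s : {set 'I_M} | t \subset s) atom s.
  by rewrite inter_shift_set (prob_hits (fun s : {set 'I_M} => t \subset s)).
rewrite /Strunc (eq_bigr _ (fun t _ => inter_atoms t)).
rewrite (exchange_big_dep predT) //=; apply: eq_bigr => s _.
rewrite sumr_const -cards_draws mulr_natr; congr (_ *+ _).
by apply: eq_card => t; rewrite !inE andbC.
Qed.

Definition Ttrunc M k : R := fine (P [set w | (k <= #|hits M w|)%N]).

Definition bonf_rem_trunc M k J : R :=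
  (-1) ^+ J.+1 * (Ttrunc M k
    - \sum_(j < J.+1) (-1) ^+ j * ('C(j + k - 1, k - 1))%:R * Strunc M (j + k)%N).

Lemma bonf_rem_truncE M k J : (0 < k)%N ->
  bonf_rem_trunc M k J = \sum_(s : {set 'I_M}) atom s * (bonf_coef k J #|s|)%:R.
Proof.
move=> k_gt0; rewrite /bonf_rem_trunc /Ttrunc.
rewrite (prob_hits (fun s : {set 'I_M} => k <= #|s|)%N) /=.
under [X in _ - X]eq_bigr do rewrite StruncE.
under [X in _ - X]eq_bigr do rewrite mulr_sumr.
rewrite big_mkcond exchange_big -sumrB mulr_sumr; apply: eq_bigr => s _ /=.
rewrite -(bonf_remainder R J #|s| k_gt0) [RHS]mulrCA; congr (_ * _).
rewrite [RHS]mulrBr [in RHS]mulr_sumr; congr (_ - _).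
  by case: (k <= #|s|)%N; rewrite ?mulr1 ?mulr0.
by apply: eq_bigr => j _; rewrite mulrCA.
Qed.

Lemma card_hits_le w : {homo (fun M => #|hits M w|) : M N / (M <= N)%N >-> (M <= N)%N}.
Proof.
have card_hitsE M : #|hits M w| = (\sum_(i < M) `[< A i.+1 w >])%N.
  by rewrite -sum1_card big_mkcond /=; apply: eq_bigr => i _; rewrite inE; case: asboolP.
apply: homo_leq => [//|M N L|M]; first exact: leq_trans.
by rewrite !card_hitsE big_ord_recr /= leq_addr.
Qed.

Lemma bigcup_card_hits_ge k : (0 < k)%N ->
  \bigcup_M [set w | (k <= #|hits M w|)%N] = atleast A k.
Proof.
move=> k_gt0; apply/seteqP; split => w /=.
  move=> [M _ /= le_k_hits].
  have : (0 < #|[set t : {set 'I_M} | t \subset hits M w & #|t| == k]|)%N.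
    by rewrite cards_draws bin_gt0.
  move=> /card_gt0P [t]; rewrite inE => /andP[t_hits /eqP card_t].
  exists (shift_set t); last by rewrite inter_shift_set.
  split; first by rewrite card_shift_set.
  by move=> i /shift_set_bounds /andP[].
move=> [I [card_I I_gt0] w_I].
pose M := (\max_(x <- I) x)%N.
have I_bounded x : x \in I -> (0 < x <= M)%N.
  by move=> xI; rewrite I_gt0 //=; apply: (@leq_bigmax_seq _ _ xpredT id x xI).
exists M => //=; rewrite -card_I -(shift_set_onto I_bounded) card_shift_set.
apply: subset_leq_card; apply/fintype.subsetP => i.
by rewrite !inE => iI; apply: w_I.
Qed.

Lemma Ttrunc_cvg k : (0 < k)%N -> Ttrunc M k @[M --> \oo] --> fine (P (atleast A k)).
Proof.
move=> k_gt0; set G := fun M => [set w | (k <= #|hits M w|)%N].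
have mG M : measurable (G M).
  exact: (measurable_pred_fibers (measurable_hits_eq (M := M)) (fun s => k <= #|s|)%N).
have G_nd : nondecreasing_seq G.
  by move=> M N le_MN; apply/subsetPset => w /= /leq_trans; apply; apply: card_hits_le.
have P_fin : P (atleast A k) \is a fin_num.
  by rewrite fin_num_measure // -bigcup_card_hits_ge //; apply: bigcupT_measurable.
have := nondecreasing_cvg_mu (mu := P) mG (bigcupT_measurable _ mG) G_nd.
rewrite bigcup_card_hits_ge // => cvg_PG.
by apply: fine_cvg; rewrite fineK //; apply: cvg_PG.
Qed.

Definition bounded_ksubsets (M l : nat) : set {fset nat} :=
  ksubsets l `&` [set I : {fset nat} | forall x, x \in I -> (x <= M)%N].

Lemma esum_bounded_ksubsets M l :
  \esum_(I in bounded_ksubsets M l) P (inter_of A I) = (Strunc M l)%:E.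
Proof.
rewrite (@reindex_esum _ _ _ [set t : {set 'I_M} | #|t| == l] _ (@shift_set M)); last first.
  split.
  - move=> t /= /eqP card_t; split; first split.
    + by rewrite card_shift_set.
    + by move=> i /shift_set_bounds /andP[].
    + by move=> x /shift_set_bounds /andP[].
  - by move=> s t _ _; apply: shift_set_inj.
  - move=> I [[card_I I_gt0] I_le].
    have I_bounded x : x \in I -> (0 < x <= M)%N by move=> xI; rewrite I_gt0 ?I_le.
    exists [set i : 'I_M | i.+1 \in I]%SET; last exact: shift_set_onto.
    by rewrite /= -card_shift_set shift_set_onto // card_I.
rewrite esum_fset ?fsbig_finType; last 2 first.
- exact: finite_finset.
- by move=> t _; apply: measure_ge0.
rewrite /Strunc -sumEFin; apply: eq_bigr => t _.
by rewrite fineK // fin_num_measure //; apply: measurable_inter_shift_set.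
Qed.

Lemma Strunc_cvg l : Ssum P A l \is a fin_num ->
  Strunc M l @[M --> \oo] --> fine (Ssum P A l).
Proof.
move=> Sl_fin; set E := fun M => \esum_(I in bounded_ksubsets M l) P (inter_of A I).
have E_nd : nondecreasing_seq E.
  move=> M N le_MN; apply: subset_le_esum => I [kI I_le]; split => // x xI.
  exact: leq_trans (I_le x xI) le_MN.
have supE : ereal_sup (range E) = Ssum P A l.
  apply/eqP; rewrite eq_le; apply/andP; split.
    by apply: ge_ereal_sup => _ [M _ <-]; apply: subset_le_esum => I [].
  apply: ge_ereal_sup => _ [X [X_fin X_k] <-].
  have [M X_le] := finite_fsets_bounded X_fin.
  apply: (@le_trans _ _ (E M)); last by apply: ereal_sup_ubound; exists M.
  by apply: esum_ge; exists X => //; split => // I XI; split; [apply: X_k | apply: X_le].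
have cvg_S : (fun M => (Strunc M l)%:E) @ \oo --> (fine (Ssum P A l))%:E.
  rewrite fineK // -supE.
  under eq_cvg do rewrite -esum_bounded_ksubsets.
  exact: ereal_nondecreasing_cvgn.
exact: (fine_cvg cvg_S).
Qed.

Hypothesis S_fin : forall l, (0 < l)%N -> Ssum P A l \is a fin_num.

Definition bonf_term k j : R :=
  (-1) ^+ j * ('C(j + k - 1, k - 1))%:R * fine (Ssum P A (j + k)).

Definition bonf_rem k J : R :=
  (-1) ^+ J.+1 * (fine (P (atleast A k)) - series (bonf_term k) J.+1).

Lemma bonf_rem_trunc_cvg k J : (0 < k)%N ->
  bonf_rem_trunc M k J @[M --> \oo] --> bonf_rem k J.
Proof.
move=> k_gt0; apply: cvgM; first exact: cvg_cst.
apply: cvgB; first exact: Ttrunc_cvg.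
rewrite /series /= big_mkord; apply: cvg_big => [|j _]; first exact: add_continuous.
apply: cvgM; first exact: cvg_cst.
by apply: Strunc_cvg; apply: S_fin; rewrite addn_gt0 k_gt0 orbT.
Qed.

Lemma bonf_rem_ge0 k J : (0 < k)%N -> 0 <= bonf_rem k J.
Proof.
move=> k_gt0; apply: (cvgr_to_ge (bonf_rem_trunc_cvg (J := J) k_gt0)).
apply: nearW => M; rewrite bonf_rem_truncE //; apply: sumr_ge0 => s _.
by rewrite mulr_ge0 ?atom_ge0.
Qed.

Lemma bonf_rem_shift_le k J : (0 < k)%N -> (k <= J.+1)%N ->
  bonf_rem k J.+1 <= bonf_rem k.+1 J.
Proof.
move=> k_gt0 le_kJ; rewrite -subr_ge0.
apply: (cvgr_to_ge (cvgB (bonf_rem_trunc_cvg (J := J) (ltn0Sn k))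
                         (bonf_rem_trunc_cvg (J := J.+1) k_gt0))).
apply: nearW => M /=; rewrite subr_ge0 !bonf_rem_truncE //.
apply: ler_sum => s _.
by rewrite ler_wpM2l ?atom_ge0 // ler_nat leq_bonf_coef_shift.
Qed.

Lemma norm_bonf_rem k J :
  `|bonf_rem k J| = `|fine (P (atleast A k)) - series (bonf_term k) J.+1|.
Proof. by rewrite normrM normrX normrN1 expr1n mul1r. Qed.

Lemma identity_holds_descend k : (0 < k)%N ->
  identity_holds P A k.+1 -> identity_holds P A k.
Proof.
move=> k_gt0 /cvgrPdist_le id_k1; apply/cvgrPdist_le => e e_gt0.
have [N _ near_k1] := id_k1 e e_gt0.
exists (maxn N k).+2 => // n /= le_n.
have -> : n = n.-2.+2 by lia.
have le_kn : (k <= n.-2.+1)%N by lia.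
have := bonf_rem_shift_le k_gt0 le_kn.
rewrite -(ger0_norm (bonf_rem_ge0 _ k_gt0)) -(ger0_norm (bonf_rem_ge0 _ (ltn0Sn k))).
rewrite !norm_bonf_rem => /le_trans; apply; apply: near_k1 => /=; lia.
Qed.

End Truncation.

Theorem corollary2p2 (d : measure_display) (T : measurableType d)
  (R : realType) (P : probability T R) (A : nat -> set T)
  (mA : forall i, measurable (A i))
  (Sfin : forall l, (0 < l)%N -> Ssum P A l \is a fin_num)
  (m : nat) (hm : (1 < m)%N) (hid : identity_holds P A m) :
  forall k, (1 <= k <= m - 1)%N -> identity_holds P A k.
Proof.
move=> k /andP[k_gt0 k_lt_m].
have [n def_m] : exists n, m = (k + n)%N by exists (m - k)%N; lia.
elim: n k k_gt0 {k_lt_m} def_m => [k _ | n IH k k_gt0 def_m]; first by rewrite addn0 => <-.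
apply: (identity_holds_descend mA Sfin k_gt0).
by apply: IH => //; rewrite def_m addSnnS.
Qed.
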